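(* Let $G$ be a connected $\{K_4,K_{2,3},F_1,F_2\}$-induced-minor-free graph. Then $G$ has at most one hole.
   Context: A hole is an induced cycle of length at least $4$. $H$ is an induced minor of $G$ if $H$ can be obtained from $G$ by vertex deletions and edge contractions; $\mathcal F$-induced-minor-free means no member of $\mathcal F$ is an induced minor. $F_1$ is the graph consisting of two $4$-cycles sharing exactly one edge ($C_6$ plus a chord joining two antipodal vertices); $F_2$ is the graph consisting of two $4$-cycles sharing exactly one vertex. *)

From mathcomp Require Import all_boot.
Set Implicit Arguments. Unset Strict Implicit. Unset Printing Implicit Defensive.

(* A finite simple graph is given by a vertex type V : finType and an
   adjacency relation e : rel V that is symmetric and irreflexive. *)

Definition restrict_rel (V : finType) (e : rel V) (A : {set V}) : rel V :=
  fun x y => [&& x \in A, y \in A & e x y].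

Definition connected_set (V : finType) (e : rel V) (A : {set V}) : Prop :=
  forall x y, x \in A -> y \in A -> connect (restrict_rel e A) x y.

Definition connected_graph (V : finType) (e : rel V) : Prop :=
  forall x y : V, connect e x y.

(* This is equivalent to obtaining (W,f) (up to isomorphism) from (V,e) by
   vertex deletions and edge contractions. *)
Definition induced_minor (W : finType) (f : rel W) (V : finType) (e : rel V)
  : Prop :=
  exists phi : W -> {set V},
    [/\ (forall w, phi w != set0),
        (forall w, connected_set e (phi w)),
        (forall w1 w2, w1 != w2 -> [disjoint phi w1 & phi w2]) &
        (forall w1 w2, w1 != w2 ->
           (f w1 w2 <-> exists x y, [/\ x \in phi w1, y \in phi w2 & e x y]))].

Definition rel_of_edges {n : nat} (E : seq (nat * nat)) : rel 'I_n :=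
  fun i j => ((val i, val j) \in E) || ((val j, val i) \in E).

Definition K4 : rel 'I_4 :=
  @rel_of_edges 4 [:: (0,1); (0,2); (0,3); (1,2); (1,3); (2,3)].

Definition K23 : rel 'I_5 :=
  @rel_of_edges 5 [:: (0,2); (0,3); (0,4); (1,2); (1,3); (1,4)].

(* F1: C6 = 0-1-2-3-4-5-0 plus the antipodal chord 0-3
   (two 4-cycles 0123 and 0345 sharing exactly the edge 03). *)
Definition F1 : rel 'I_6 :=
  @rel_of_edges 6 [:: (0,1); (1,2); (2,3); (3,4); (4,5); (5,0); (0,3)].

(* F2: two 4-cycles 0123 and 0456 sharing exactly the vertex 0. *)
Definition F2 : rel 'I_7 :=
  @rel_of_edges 7 [:: (0,1); (1,2); (2,3); (3,0); (0,4); (4,5); (5,6); (6,0)].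

Definition hole (V : finType) (e : rel V) (S : {set V}) : Prop :=
  exists c : seq V,
    [/\ uniq c, 4 <= size c, S = [set x in c] &
        forall x0 i j, i < size c -> j < size c ->
          e (nth x0 c i) (nth x0 c j) =
          (j == i.+1 %% size c) || (i == j.+1 %% size c)].

(* The key fact is an attachment lemma: a connected set X disjoint from a hole H
   has at most two neighbours on H, and two such neighbours are adjacent. Indeed,
   three neighbours give a K4 model and two non-adjacent ones a K_{2,3} model,
   with X and the arcs of H between the neighbours as branch sets.

   Now let H1, H2 be distinct holes. If they are disjoint and no edge joins
   them, a path between them with interior outside both glues them into an F2
   model; if an edge joins them, a case analysis on the edges between H1 and H2
   yields K4, F1 or F2. If they meet, an arc of H2 outside H1 attaches to H1 at
   a vertex or along an edge, so H1 and H2 share exactly one vertex or exactly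
   one edge; a shared vertex yields F2 (or F1 when an edge joins the two holes
   away from it) and a shared edge yields F1. *)

From mathcomp Require Import all_boot zify.
Set Implicit Arguments. Unset Strict Implicit. Unset Printing Implicit Defensive.

Lemma eqn_mod_lt2 n a b : 0 < n -> a < n + n -> b < n + n ->
  (a == b %[mod n]) = [|| a == b, a == b + n | b == a + n].
Proof.
move=> n0 ha hb.
have modE c : c < n + n -> c %% n = if c < n then c else c - n.
  move=> hc; case: ltnP => hcn; first by rewrite modn_small.
  by rewrite -{1}(subnK hcn) modnDr modn_small //; lia.
rewrite (modE a) // (modE b) //; case: ltnP => ?; case: ltnP => ?; lia.
Qed.

Section Graph.
Variables (V : finType) (e : rel V).
Hypotheses (esym : symmetric e) (eirr : irreflexive e).

Lemma disjointP (A B : {set V}) :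
  reflect (forall x, x \in A -> x \notin B) [disjoint A & B].
Proof. by rewrite disjoints_subset; apply: (iffP subsetP) => h x /h; rewrite inE. Qed.

Lemma disjoint_set2 x y (A : {set V}) :
  [disjoint [set x; y] & A] = (x \notin A) && (y \notin A).
Proof.
apply/disjointP/andP => [h|[xA yA] z]; first by split; apply: h; rewrite !inE eqxx ?orbT.
by rewrite !inE => /orP [] /eqP ->.
Qed.

Lemma disjoint_setDl (A B : {set V}) : [disjoint A :\: B & B].
Proof. by have := subxx (A :\: B); rewrite subsetD => /andP []. Qed.

Lemma setD_around (S M : {set V}) x a q :
  S = [set x; a; q] :|: M -> [disjoint [set x; a; q] & M] -> q != x -> q != a ->
  S :\: [set x; a] = q |: M.
Proof.
move=> -> dM qx qa; apply/setP=> z; rewrite !inE.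
case: (eqVneq z q) => [->|zq]; first by rewrite negb_or qx qa !orbT.
rewrite orbF /=; case zM: (z \in M); last by rewrite !orbF andNb.
have /negbT := disjointFl dM zM; rewrite !inE => /norP [/norP [zx za] _].
by rewrite negb_or (negbTE zx) (negbTE za) orbT.
Qed.

Lemma set1_neq0 (x : V) : [set x] != set0.
Proof. by apply/set0Pn; exists x; rewrite set11. Qed.

Lemma set2_neq0 (x y : V) : [set x; y] != set0.
Proof. by apply/set0Pn; exists x; rewrite !inE eqxx. Qed.

Definition adjacent (A B : {set V}) := [exists x in A, exists y in B, e x y].

Definition touches (X : {set V}) u := [exists x in X, e x u].

Lemma adjacentP (A B : {set V}) :
  reflect (exists x y, [/\ x \in A, y \in B & e x y]) (adjacent A B).
Proof.
apply: (iffP exists_inP) => [[x xA /exists_inP [y yB exy]]|[x [y [xA yB exy]]]].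
  by exists x, y.
by exists x => //; apply/exists_inP; exists y.
Qed.

Lemma touchesP (X : {set V}) u : reflect (exists2 x, x \in X & e x u) (touches X u).
Proof. exact: exists_inP. Qed.

Lemma adjacentC (A B : {set V}) : adjacent A B = adjacent B A.
Proof.
by apply/adjacentP/adjacentP => -[x [y [xA yB exy]]]; exists y, x; rewrite esym.
Qed.

Lemma adjacentW (A B A' B' : {set V}) : A \subset A' -> B \subset B' ->
  adjacent A B -> adjacent A' B'.
Proof.
move=> /subsetP sA /subsetP sB /adjacentP [x [y [xA yB exy]]].
by apply/adjacentP; exists x, y; split; [apply: sA | apply: sB |].
Qed.

Lemma adjacent_set1r (A : {set V}) y : adjacent A [set y] = touches A y.
Proof.
apply/adjacentP/touchesP => [[x [z [xA /set1P -> exz]]]|[x xA exy]].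
  by exists x.
by exists x, y; rewrite set11.
Qed.

Lemma adjacent_set1l x (B : {set V}) : adjacent [set x] B = touches B x.
Proof. by rewrite adjacentC adjacent_set1r. Qed.

Lemma adjacent_set2r (A : {set V}) x y : adjacent A [set x; y] = touches A x || touches A y.
Proof.
apply/adjacentP/orP => [[u [z [uA /set2P [] -> euz]]]|].
- by left; apply/touchesP; exists u.
- by right; apply/touchesP; exists u.
by case=> /touchesP [u uA eu]; exists u; [exists x | exists y]; rewrite !inE eqxx ?orbT.
Qed.

Lemma adjacent_set2l x y (B : {set V}) : adjacent [set x; y] B = touches B x || touches B y.
Proof. by rewrite adjacentC adjacent_set2r. Qed.

Lemma touches_set1 x y : touches [set x] y = e x y.
Proof. by apply/touchesP/idP => [[z /set1P ->]|]; last exists x; rewrite ?set11. Qed.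

Lemma touches_set2 x y u : touches [set x; y] u = e x u || e y u.
Proof.
apply/touchesP/orP => [[z /set2P [] -> ezu]|[exu|eyu]]; [by left|by right|..].
- by exists x; rewrite // !inE eqxx.
- by exists y; rewrite // !inE eqxx orbT.
Qed.

Lemma touches_neq0 (X : {set V}) u : touches X u -> X != set0.
Proof. by case/touchesP=> x xX _; apply/set0Pn; exists x. Qed.

Lemma touches_nbrW (M R : {set V}) y y' : M \subset R ->
  {in R, forall z, e y' z -> e y z} -> touches M y' -> touches M y.
Proof.
move=> /subsetP sMR T /touchesP [z zM ezy]; apply/touchesP; exists z => //.
by rewrite esym T ?sMR // esym.
Qed.

Lemma edge_neq x y : e x y -> x != y.
Proof. by apply: contraTneq => ->; rewrite eirr. Qed.

Lemma restrict_rel_sym (A : {set V}) : symmetric (restrict_rel e A).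
Proof. by move=> x y; rewrite /restrict_rel esym andbCA. Qed.

Lemma connect_restrict_sub (A B : {set V}) x y : A \subset B ->
  connect (restrict_rel e A) x y -> connect (restrict_rel e B) x y.
Proof.
move=> /subsetP sAB; apply: connect_sub => a b /and3P [aA bA eab].
by apply: connect1; rewrite /restrict_rel sAB ?sAB.
Qed.

Lemma connected_from (A : {set V}) r : r \in A ->
  (forall x, x \in A -> connect (restrict_rel e A) r x) -> connected_set e A.
Proof.
move=> rA h x y xA yA; apply: connect_trans (h _ yA).
by rewrite (sym_connect_sym (@restrict_rel_sym A)); apply: h.
Qed.

Lemma connected_set1 x : connected_set e [set x].
Proof. by move=> a b /set1P -> /set1P ->. Qed.

Lemma connected_setU (A B : {set V}) : connected_set e A -> connected_set e B ->
  adjacent A B -> connected_set e (A :|: B).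
Proof.
move=> cA cB /adjacentP [a [b [aA bB eab]]].
apply: (@connected_from _ a); first by rewrite inE aA.
move=> x /setUP [xA|xB]; first exact: connect_restrict_sub (subsetUl _ _) (cA _ _ aA xA).
apply: connect_trans (connect_restrict_sub (subsetUr _ _) (cB _ _ bB xB)).
by apply: connect1; rewrite /restrict_rel !inE aA bB orbT eab.
Qed.

Lemma connected_set2 x y : x = y \/ e x y -> connected_set e [set x; y].
Proof.
case=> [->|exy]; first by rewrite setUid; apply: connected_set1.
apply: connected_setU; try exact: connected_set1.
by rewrite adjacent_set1l touches_set1 esym.
Qed.

Lemma connected_path x s : path e x s -> connected_set e [set y in x :: s].
Proof.
elim: s x => [|y s IH] x /=.
  move=> _; have -> : [set y in [:: x]] = [set x] by apply/setP=> z; rewrite !inE.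
  exact: connected_set1.
case/andP=> exy ps.
have -> : [set z in x :: y :: s] = [set x] :|: [set z in y :: s].
  by apply/setP=> z; rewrite !inE.
apply: connected_setU; [exact: connected_set1 | exact: IH |].
by rewrite adjacent_set1l; apply/touchesP; exists y; rewrite 1?esym // inE mem_head.
Qed.

Lemma path_between (A B : {set V}) x y : x \in A -> y \in B ->
  [disjoint A & B] -> connect e x y ->
  exists a b s, [/\ a \in A, b \in B, path e a (rcons s b) &
                    {in s, forall z, z \notin A :|: B}].
Proof.
move=> xA yB dAB /connectP [p pp yE]; rewrite {y}yE in yB.
have xB : x \notin B by rewrite (disjointFr dAB xA).
have : exists a s, [/\ a \in A, path e a s, last a s = x &
                      {in s, forall z, z \notin A :|: B}] by exists x, [::].
elim: p x pp yB xB {xA} => [|z p IH] x /=; first by move=> _ ->.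
case/andP=> exz pz lB xB [a [s [aA ps ls sAB]]].
case: (boolP (z \in B)) => zB; first by exists a, z, s; rewrite rcons_path ps ls.
apply: (IH z pz lB zB); case: (boolP (z \in A)) => zA.
  by exists z, [::]; split.
exists a, (rcons s z); split; rewrite ?rcons_path ?ps ?ls ?last_rcons //.
by move=> u; rewrite mem_rcons inE => /orP [/eqP ->|/sAB //]; rewrite !inE negb_or zA.
Qed.

Lemma path_sides a s b : path e a (rcons s b) ->
  [/\ connected_set e [set z in a :: s], touches [set z in a :: s] b,
      connected_set e [set z in rcons s b] & touches [set z in rcons s b] a].
Proof.
rewrite rcons_path => /andP [ps eb]; split.
- exact: connected_path.
- by apply/touchesP; exists (last a s); rewrite // inE mem_last.
- case: s ps eb => [|h t] /= => [_ _|/andP [_ pt] eb]; apply: connected_path => //.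
  by rewrite rcons_path pt.
- case: s ps eb => [|h t] /= => [_ eab|/andP [eah _] _]; apply/touchesP.
    by exists b; [rewrite inE mem_head | rewrite esym].
  by exists h; [rewrite inE mem_head | rewrite esym].
Qed.

(** * Induced-minor models of K4, K23, F1 and F2 *)

Lemma induced_minor_of_seq n (f : rel 'I_n) (L : seq {set V}) :
  symmetric f ->
  (forall i, i < n -> nth set0 L i != set0) ->
  (forall i, i < n -> connected_set e (nth set0 L i)) ->
  (forall i j, i < j -> j < n -> [disjoint nth set0 L i & nth set0 L j]) ->
  (forall i j (Hi : i < n) (Hj : j < n), i < j ->
     adjacent (nth set0 L i) (nth set0 L j) = f (Ordinal Hi) (Ordinal Hj)) ->
  induced_minor f e.
Proof.
move=> fsym hne hc hd ha; exists (fun w : 'I_n => nth set0 L w); split.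
- by move=> w; apply: hne.
- by move=> w; apply: hc.
- move=> [i Hi] [j Hj]; rewrite -val_eqE /=.
  by case: ltngtP => // lij _; [|rewrite disjoint_sym]; apply: hd.
- move=> [i Hi] [j Hj]; rewrite -val_eqE /=.
  case: ltngtP => // lij _; [rewrite -ha // | rewrite fsym -ha // adjacentC].
  all: by split=> [|/adjacentP]; [move/adjacentP|].
Qed.

Ltac decide_edge :=
  rewrite /K4 /K23 /F1 /F2 /rel_of_edges /=; by [|apply/negbTE].

Lemma K4_of (A0 A1 A2 A3 : {set V}) :
  A0 != set0 -> A1 != set0 -> A2 != set0 -> A3 != set0 ->
  connected_set e A0 -> connected_set e A1 -> connected_set e A2 ->
  connected_set e A3 ->
  [disjoint A0 & A1] -> [disjoint A0 & A2] -> [disjoint A0 & A3] ->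
  [disjoint A1 & A2] -> [disjoint A1 & A3] -> [disjoint A2 & A3] ->
  adjacent A0 A1 -> adjacent A0 A2 -> adjacent A0 A3 -> adjacent A1 A2 ->
  adjacent A1 A3 -> adjacent A2 A3 ->
  induced_minor K4 e.
Proof.
move=> *; apply: (@induced_minor_of_seq 4 K4 [:: A0; A1; A2; A3]).
- by move=> i j; rewrite /K4 /rel_of_edges orbC.
- by move=> [|[|[|[|i]]]].
- by move=> [|[|[|[|i]]]].
- by move=> [|[|[|[|i]]]] [|[|[|[|j]]]].
move=> i j Hi Hj Hij.
by case: i Hi Hij => [|[|[|[|]]]] //= Hi Hij;
   case: j Hj Hij => [|[|[|[|]]]] //= Hj Hij; decide_edge.
Qed.

Lemma K4_of_clique x y z t : e x y -> e x z -> e x t -> e y z -> e y t -> e z t ->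
  induced_minor K4 e.
Proof.
move=> exy exz ext eyz eyt ezt.
apply: (@K4_of [set x] [set y] [set z] [set t]); try exact: set1_neq0.
all: try exact: connected_set1.
all: rewrite ?disjoints1 ?inE ?adjacent_set1l ?touches_set1 1?esym //.
all: by rewrite edge_neq.
Qed.

Lemma K23_of (A0 A1 A2 A3 A4 : {set V}) :
  A0 != set0 -> A1 != set0 -> A2 != set0 -> A3 != set0 -> A4 != set0 ->
  connected_set e A0 -> connected_set e A1 -> connected_set e A2 ->
  connected_set e A3 -> connected_set e A4 ->
  [disjoint A0 & A1] -> [disjoint A0 & A2] -> [disjoint A0 & A3] ->
  [disjoint A0 & A4] -> [disjoint A1 & A2] -> [disjoint A1 & A3] ->
  [disjoint A1 & A4] -> [disjoint A2 & A3] -> [disjoint A2 & A4] ->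
  [disjoint A3 & A4] ->
  adjacent A0 A2 -> adjacent A0 A3 -> adjacent A0 A4 -> adjacent A1 A2 ->
  adjacent A1 A3 -> adjacent A1 A4 ->
  ~~ adjacent A0 A1 -> ~~ adjacent A2 A3 -> ~~ adjacent A2 A4 ->
  ~~ adjacent A3 A4 ->
  induced_minor K23 e.
Proof.
move=> *; apply: (@induced_minor_of_seq 5 K23 [:: A0; A1; A2; A3; A4]).
- by move=> i j; rewrite /K23 /rel_of_edges orbC.
- by move=> [|[|[|[|[|i]]]]].
- by move=> [|[|[|[|[|i]]]]].
- by move=> [|[|[|[|[|i]]]]] [|[|[|[|[|j]]]]].
move=> i j Hi Hj Hij.
by case: i Hi Hij => [|[|[|[|[|]]]]] //= Hi Hij;
   case: j Hj Hij => [|[|[|[|[|]]]]] //= Hj Hij; decide_edge.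
Qed.

Lemma F1_of (A0 A1 A2 A3 A4 A5 : {set V}) :
  A0 != set0 -> A1 != set0 -> A2 != set0 -> A3 != set0 -> A4 != set0 ->
  A5 != set0 ->
  connected_set e A0 -> connected_set e A1 -> connected_set e A2 ->
  connected_set e A3 -> connected_set e A4 -> connected_set e A5 ->
  [disjoint A0 & A1] -> [disjoint A0 & A2] -> [disjoint A0 & A3] ->
  [disjoint A0 & A4] -> [disjoint A0 & A5] -> [disjoint A1 & A2] ->
  [disjoint A1 & A3] -> [disjoint A1 & A4] -> [disjoint A1 & A5] ->
  [disjoint A2 & A3] -> [disjoint A2 & A4] -> [disjoint A2 & A5] ->
  [disjoint A3 & A4] -> [disjoint A3 & A5] -> [disjoint A4 & A5] ->
  adjacent A0 A1 -> adjacent A1 A2 -> adjacent A2 A3 -> adjacent A3 A4 ->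
  adjacent A4 A5 -> adjacent A0 A5 -> adjacent A0 A3 ->
  ~~ adjacent A0 A2 -> ~~ adjacent A0 A4 -> ~~ adjacent A1 A3 ->
  ~~ adjacent A1 A4 -> ~~ adjacent A1 A5 -> ~~ adjacent A2 A4 ->
  ~~ adjacent A2 A5 -> ~~ adjacent A3 A5 ->
  induced_minor F1 e.
Proof.
move=> *; apply: (@induced_minor_of_seq 6 F1 [:: A0; A1; A2; A3; A4; A5]).
- by move=> i j; rewrite /F1 /rel_of_edges orbC.
- by move=> [|[|[|[|[|[|i]]]]]].
- by move=> [|[|[|[|[|[|i]]]]]].
- by move=> [|[|[|[|[|[|i]]]]]] [|[|[|[|[|[|j]]]]]].
move=> i j Hi Hj Hij.
by case: i Hi Hij => [|[|[|[|[|[|]]]]]] //= Hi Hij;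
   case: j Hj Hij => [|[|[|[|[|[|]]]]]] //= Hj Hij; decide_edge.
Qed.

Lemma F2_of (A0 A1 A2 A3 A4 A5 A6 : {set V}) :
  A0 != set0 -> A1 != set0 -> A2 != set0 -> A3 != set0 -> A4 != set0 ->
  A5 != set0 -> A6 != set0 ->
  connected_set e A0 -> connected_set e A1 -> connected_set e A2 ->
  connected_set e A3 -> connected_set e A4 -> connected_set e A5 ->
  connected_set e A6 ->
  [disjoint A0 & A1] -> [disjoint A0 & A2] -> [disjoint A0 & A3] ->
  [disjoint A0 & A4] -> [disjoint A0 & A5] -> [disjoint A0 & A6] ->
  [disjoint A1 & A2] -> [disjoint A1 & A3] -> [disjoint A1 & A4] ->
  [disjoint A1 & A5] -> [disjoint A1 & A6] -> [disjoint A2 & A3] ->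
  [disjoint A2 & A4] -> [disjoint A2 & A5] -> [disjoint A2 & A6] ->
  [disjoint A3 & A4] -> [disjoint A3 & A5] -> [disjoint A3 & A6] ->
  [disjoint A4 & A5] -> [disjoint A4 & A6] -> [disjoint A5 & A6] ->
  adjacent A0 A1 -> adjacent A1 A2 -> adjacent A2 A3 -> adjacent A0 A3 ->
  adjacent A0 A4 -> adjacent A4 A5 -> adjacent A5 A6 -> adjacent A0 A6 ->
  ~~ adjacent A0 A2 -> ~~ adjacent A0 A5 -> ~~ adjacent A1 A3 ->
  ~~ adjacent A1 A4 -> ~~ adjacent A1 A5 -> ~~ adjacent A1 A6 ->
  ~~ adjacent A2 A4 -> ~~ adjacent A2 A5 -> ~~ adjacent A2 A6 ->
  ~~ adjacent A3 A4 -> ~~ adjacent A3 A5 -> ~~ adjacent A3 A6 ->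
  ~~ adjacent A4 A6 ->
  induced_minor F2 e.
Proof.
move=> *; apply: (@induced_minor_of_seq 7 F2 [:: A0; A1; A2; A3; A4; A5; A6]).
- by move=> i j; rewrite /F2 /rel_of_edges orbC.
- by move=> [|[|[|[|[|[|[|i]]]]]]].
- by move=> [|[|[|[|[|[|[|i]]]]]]].
- by move=> [|[|[|[|[|[|[|i]]]]]]] [|[|[|[|[|[|[|j]]]]]]].
move=> i j Hi Hj Hij.
by case: i Hi Hij => [|[|[|[|[|[|[|]]]]]]] //= Hi Hij;
   case: j Hj Hij => [|[|[|[|[|[|[|]]]]]]] //= Hj Hij; decide_edge.
Qed.

(** * Holes as periodic enumerations of induced cycles *)

Definition arc (v : nat -> V) k m : {set V} := [set v (k + val t) | t : 'I_m].

Lemma arcP v k m x : reflect (exists2 t, t < m & x = v (k + t)) (x \in arc v k m).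
Proof.
apply: (iffP imsetP) => [[t _ ->]|[t tm ->]]; first by exists (val t); rewrite ?ltn_ord.
by exists (Ordinal tm).
Qed.

Lemma arc_neq0 v k m : 0 < m -> arc v k m != set0.
Proof. by move=> m0; apply/set0Pn; exists (v (k + 0)); apply/arcP; exists 0. Qed.

(* [v] walks around the induced cycle [S] of length [n], indices read mod [n]. *)
Definition ecycle n (v : nat -> V) (S : {set V}) :=
  [/\ 3 < n, forall i j, (v i == v j) = (i == j %[mod n]),
      forall i j, e (v i) (v j) = (j == i.+1 %[mod n]) || (i == j.+1 %[mod n])
    & S = arc v 0 n].

Lemma hole_ecycle S : hole e S -> exists n v, ecycle n v S.
Proof.
case=> [[|x0 c] [uc c4 -> hc]] //.
set n := size (x0 :: c) in c4 hc *; have n0 : 0 < n by lia.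
exists n, (fun i => nth x0 (x0 :: c) (i %% n)); split => //.
- by move=> i j; rewrite nth_uniq // ltn_pmod.
- move=> i j; rewrite hc ?ltn_pmod //.
  by rewrite -[(i %% n).+1]addn1 -[(j %% n).+1]addn1 !modnDml !addn1.
apply/setP=> x; rewrite inE; apply/(nthP x0)/arcP => [[i ilt <-]|[i ilt ->]].
  by exists i; rewrite // add0n modn_small.
by exists i; rewrite // add0n modn_small.
Qed.

Section Ecycle.
Variables (n : nat) (v : nat -> V) (S : {set V}).
Hypothesis Sv : ecycle n v S.

Lemma ecycle_gt3 : 3 < n. Proof. by case: Sv. Qed.

Lemma ecycle_eqE a b : a < n + n -> b < n + n ->
  (v a == v b) = [|| a == b, a == b + n | b == a + n].
Proof. by case: Sv => n3 vE _ _ ha hb; rewrite vE eqn_mod_lt2 //; lia. Qed.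

Lemma ecycle_adjE a b : a.+1 < n + n -> b.+1 < n + n ->
  e (v a) (v b) = [|| b == a.+1, b == a.+1 + n, a.+1 == b + n,
                      a == b.+1, a == b.+1 + n | b.+1 == a + n].
Proof. by case: Sv => n3 _ eE _ ha hb; rewrite eE !eqn_mod_lt2 //; lia. Qed.

Lemma ecycle_in i : v i \in S.
Proof.
case: Sv => n3 vE _ ->; apply/arcP; exists (i %% n); first by rewrite ltn_pmod; lia.
by apply/eqP; rewrite vE add0n modn_mod.
Qed.

Lemma ecycleP x : x \in S -> exists2 i, i < n & x = v i.
Proof. by case: Sv => _ _ _ -> /arcP [i ilt ->]; exists i. Qed.

Lemma ecycle_rot k : ecycle n (fun i => v (k + i)) S.
Proof.
case: Sv => n3 vE eE SE; split => //.
- by move=> i j; rewrite vE eqn_modDl.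
- by move=> i j; rewrite eE -!addnS !eqn_modDl.
apply/setP=> x; apply/idP/arcP => [/ecycleP [i ilt ->]|[i _ ->]]; last exact: ecycle_in.
exists ((i + k * n - k) %% n); first by rewrite ltn_pmod; lia.
apply/eqP; rewrite vE add0n modnDmr.
have -> : k + (i + k * n - k) = k * n + i by nia.
by rewrite modnMDl.
Qed.

Lemma arc_sub k m : arc v k m \subset S.
Proof. by apply/subsetP => x /arcP [t _ ->]; apply: ecycle_in. Qed.

Lemma arc_connected k m : 0 < m -> connected_set e (arc v k m).
Proof.
move=> m0; apply: (@connected_from _ (v (k + 0))); first by apply/arcP; exists 0.
move=> x /arcP [t tm ->]; elim: t tm => [//|t IH] tm.
apply: connect_trans (IH (ltnW tm)) (connect1 _).
rewrite /restrict_rel; apply/and3P; split; try by apply/arcP; exists t.+1.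
- by apply/arcP; exists t => //; apply: ltnW.
- by case: Sv => _ _ eE _; rewrite eE addnS eqxx.
Qed.

Ltac ecycle_arith := rewrite ?ecycle_eqE ?ecycle_adjE; try lia.

Lemma arc_disjoint k1 m1 k2 m2 : k1 + m1 <= k2 -> k2 + m2 <= n ->
  [disjoint arc v k1 m1 & arc v k2 m2].
Proof.
move=> h1 h2; apply/disjointP => x /arcP [t1 ht1 ->]; apply/negP => /arcP [t2 ht2 /eqP].
by have := ecycle_gt3; ecycle_arith.
Qed.

Lemma adjacent_arcs k1 m1 k2 m2 t1 t2 : t1 < m1 -> t2 < m2 ->
  e (v (k1 + t1)) (v (k2 + t2)) -> adjacent (arc v k1 m1) (arc v k2 m2).
Proof.
by move=> h1 h2 he; apply/adjacentP; exists (v (k1 + t1)), (v (k2 + t2));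
  split => //; apply/arcP; [exists t1 | exists t2].
Qed.

Lemma adjacent_arc X k m t : t < m -> touches X (v (k + t)) -> adjacent X (arc v k m).
Proof.
move=> tm /touchesP [x xX ex]; apply/adjacentP; exists x, (v (k + t)).
by split => //; apply/arcP; exists t.
Qed.

Lemma ecycle_eq0 j : j < n -> (v 0 == v j) = (j == 0).
Proof. by move=> jn; have := ecycle_gt3; ecycle_arith. Qed.

Lemma ecycle_adj0 j : j < n -> e (v 0) (v j) = (j == 1) || (j == n - 1).
Proof. by move=> jn; have := ecycle_gt3; ecycle_arith. Qed.

Lemma ecycle_around : let M := arc v 2 (n - 3) in
  [/\ e (v 0) (v 1), e (v 0) (v (n - 1)), v 1 != v (n - 1),
      ~~ e (v 1) (v (n - 1)) & S = [set v 0; v 1; v (n - 1)] :|: M] /\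
  [/\ [disjoint [set v 0; v 1; v (n - 1)] & M], connected_set e M,
      touches M (v 1), touches M (v (n - 1)) & ~~ touches M (v 0)].
Proof.
have n3 := ecycle_gt3; split; split.
- by ecycle_arith.
- by ecycle_arith.
- by ecycle_arith.
- by ecycle_arith.
- apply/setP=> x; rewrite !inE -!orbA; apply/idP/idP => [/ecycleP [i ilt ->]|].
    case: (ltnP i 2) => [|i2].
      by case: i ilt => [|[|//]] _ _; rewrite eqxx ?orbT.
    case: (ltnP i (n - 1)) => i1; last by rewrite (_ : i = n - 1) ?eqxx ?orbT //; lia.
    suff -> : v i \in arc v 2 (n - 3) by rewrite !orbT.
    by apply/arcP; exists (i - 2); [lia | congr v; lia].
  by case/or4P=> [/eqP->|/eqP->|/eqP->|/arcP [t _ ->]]; apply: ecycle_in.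
- by apply/disjointP => x; rewrite !inE -orbA => /or3P [] /eqP -> ;
    apply/negP => /arcP [t ht /eqP]; ecycle_arith.
- by apply: arc_connected; lia.
- by apply/touchesP; exists (v (2 + 0)); [apply/arcP; exists 0 => //; lia | ecycle_arith].
- apply/touchesP; exists (v (2 + (n - 4))); last by ecycle_arith.
  by apply/arcP; exists (n - 4) => //; lia.
- by apply/touchesP => -[x /arcP [t ht ->]]; apply/negP; ecycle_arith.
Qed.

Lemma ecycle_exit (A : {set V}) : v 0 \in A -> ~~ (S \subset A) ->
  exists k, v k \in A /\ v k.+1 \notin A.
Proof.
move=> v0A /subsetPn [y /ecycleP [j _ ->] vjA].
have ext : exists t, v t \notin A by exists j.
have [t vtA tmin] := ex_minnP ext.
have t0 : 0 < t by case: t vtA {tmin} => //; rewrite v0A.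
exists t.-1; rewrite prednK //; split=> //.
by apply: contraT => /tmin; lia.
Qed.

Lemma ecycle_return (A : {set V}) : v 0 \in A -> v 1 \notin A ->
  exists2 m, 1 < m <= n & v m \in A /\ forall t, 0 < t < m -> v t \notin A.
Proof.
move=> v0A v1A; have n3 := ecycle_gt3.
have vn : v n = v 0 by apply/eqP; ecycle_arith.
have exm : exists m, (0 < m) && (v m \in A) by exists n; rewrite vn v0A andbT; lia.
have [m /andP [m0 vmA] mmin] := ex_minnP exm.
exists m; last split=> // t /andP [t0 tm].
  rewrite (mmin n) ?vn ?v0A ?andbT; last lia.
  by case: m m0 vmA {mmin} => [|[|]] //; rewrite (negbTE v1A).
by apply: contraT => /negbNE vtA; have := mmin t; rewrite t0 vtA => /(_ isT); lia.
Qed.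

Lemma ecycle_arc_ends m : 1 < m ->
  touches (arc v 1 (m - 1)) (v 0) /\ touches (arc v 1 (m - 1)) (v m).
Proof.
move=> m1; have n3 := ecycle_gt3; split; apply/touchesP.
  by exists (v (1 + 0)); [apply/arcP; exists 0 => //; lia | ecycle_arith].
exists (v (m - 1)); first by apply/arcP; exists (m - 2); [lia | congr v; lia].
by case: Sv => _ _ eE _; rewrite {2}(_ : m = (m - 1).+1) ?eE ?eqxx //; lia.
Qed.

Lemma ecycle_close m : 1 < m -> m <= n -> v 0 = v m \/ e (v 0) (v m) -> n - 1 <= m.
Proof.
move=> m1 mn; have n3 := ecycle_gt3.
by case=> [/eqP|]; ecycle_arith.
Qed.

Lemma K4_of_touches3 X t1 t2 : connected_set e X -> [disjoint X & S] ->
  0 < t1 < t2 -> t2 < n ->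
  touches X (v 0) -> touches X (v t1) -> touches X (v t2) -> induced_minor K4 e.
Proof.
move=> cX dX /andP [t10 t12] t2n T0 T1 T2; have n3 := ecycle_gt3.
have dXa k m : [disjoint X & arc v k m] by apply: disjointWr dX; apply: arc_sub.
apply: (@K4_of X (arc v 0 t1) (arc v t1 (t2 - t1)) (arc v t2 (n - t2))).
all: try (by apply: touches_neq0 T0); try (by apply: arc_neq0; lia).
all: try (by apply: arc_connected; lia); try done.
all: try (by apply: arc_disjoint; lia).
- by apply: (@adjacent_arc _ 0 _ 0).
- by apply: (@adjacent_arc _ _ _ 0); rewrite ?addn0 //; lia.
- by apply: (@adjacent_arc _ _ _ 0); rewrite ?addn0 //; lia.
- by apply: (@adjacent_arcs _ _ _ _ (t1 - 1) 0); try lia; ecycle_arith.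
- by apply: (@adjacent_arcs _ _ _ _ 0 (n - t2 - 1)); try lia; ecycle_arith.
- by apply: (@adjacent_arcs _ _ _ _ (t2 - t1 - 1) 0); try lia; ecycle_arith.
Qed.

Lemma K23_of_touches2 X j : connected_set e X -> [disjoint X & S] ->
  1 < j < n - 1 -> touches X (v 0) -> touches X (v j) ->
  (forall t, t < n -> t != 0 -> t != j -> ~~ touches X (v t)) ->
  induced_minor K23 e.
Proof.
move=> cX dX /andP [j1 jn] T0 Tj Tno; have n3 := ecycle_gt3.
have dXa k m : [disjoint arc v k m & X].
  by rewrite disjoint_sym; apply: disjointWr dX; apply: arc_sub.
have nadj k m : 0 < k -> k + m <= n -> ~~ (k <= j < k + m) ->
    ~~ adjacent (arc v k m) X.
  move=> k0 km kj; apply/adjacentP => -[x [y [/arcP [t ht ->] yX exy]]].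
  apply: (negP (Tno (k + t) _ _ _)); try lia.
  by apply/touchesP; exists y; rewrite // esym.
apply: (@K23_of (arc v 0 1) (arc v j 1) (arc v 1 (j - 1))
                (arc v j.+1 (n - j.+1)) X).
all: try (by apply: touches_neq0 T0); try (by apply: arc_neq0; lia).
all: try (by apply: arc_connected; lia); try done.
all: try (by apply: arc_disjoint; lia).
all: try (by apply: nadj; lia).
- by rewrite disjoint_sym; apply: arc_disjoint; lia.
- by apply: (@adjacent_arcs _ _ _ _ 0 0); try lia; ecycle_arith.
- by apply: (@adjacent_arcs _ _ _ _ 0 (n - j.+1 - 1)); try lia; ecycle_arith.
- by rewrite adjacentC; apply: (@adjacent_arc _ 0 _ 0).
- by apply: (@adjacent_arcs _ _ _ _ 0 (j - 2)); try lia; ecycle_arith.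
- by apply: (@adjacent_arcs _ _ _ _ 0 0); try lia; ecycle_arith.
- by rewrite adjacentC; apply: (@adjacent_arc _ _ _ 0); rewrite ?addn0.
- by apply/adjacentP => -[x [y [/arcP [t ht ->] /arcP [t' ht' ->]]]]; ecycle_arith.
- by apply/adjacentP => -[x [y [/arcP [t ht ->] /arcP [t' ht' ->]]]]; ecycle_arith.
Qed.

End Ecycle.

Lemma hole_ecycle_at S x : hole e S -> x \in S ->
  exists n v, ecycle n v S /\ v 0 = x.
Proof.
move=> /hole_ecycle [n [v Sv]] /(ecycleP Sv) [i _ ->].
by exists n, (fun j => v (i + j)); rewrite addn0; split => //; apply: ecycle_rot.
Qed.

Lemma hole_around S x a : hole e S -> x \in S -> a \in S -> e x a ->
  exists q (M : {set V}),
  [/\ S :\: [set x; a] = q |: M, q \notin M, e x q & ~~ e a q] /\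
  [/\ connected_set e M, touches M a, touches M q & ~~ touches M x].
Proof.
move=> hS xS aS; have [n [w [Sw <-]]] := hole_ecycle_at hS xS.
have [j jn ->] := ecycleP Sw aS.
have [[e01 e0n n1n ne1n SE] [dM cM t1 tn nt0]] := ecycle_around Sw.
have qM q : q \in [set w 0; w 1; w (n - 1)] -> q \notin arc w 2 (n - 3).
  by move=> qS; rewrite (disjointFr dM qS).
have swap : [set w 0; w 1; w (n - 1)] = [set w 0; w (n - 1); w 1].
  by apply/setP=> z; rewrite !inE orbAC.
rewrite (ecycle_adj0 Sw) // => /orP [] /eqP ->.
  exists (w (n - 1)), (arc w 2 (n - 3)); split; split=> //.
    by apply: setD_around SE dM _ _; rewrite eq_sym // edge_neq.
  by apply: qM; rewrite !inE eqxx orbT.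
exists (w 1), (arc w 2 (n - 3)); split; split; rewrite 1?[e (w (n - 1)) _]esym //.
  by rewrite swap in SE dM; apply: setD_around SE dM _ _; rewrite // eq_sym edge_neq.
by apply: qM; rewrite !inE eqxx !orbT.
Qed.

Lemma hole_neighbour S x : hole e S -> x \in S -> exists2 a, a \in S & e x a.
Proof.
move=> hS xS; have [n [v [Sv <-]]] := hole_ecycle_at hS xS.
exists (v 1); first exact: (ecycle_in Sv 1).
by rewrite (ecycle_adj0 Sv) //; have := ecycle_gt3 Sv; lia.
Qed.

Lemma hole_connected S : hole e S -> connected_set e S.
Proof.
move=> /hole_ecycle [n [v Sv]]; have n3 := ecycle_gt3 Sv.
by case: (Sv) => _ _ _ ->; apply: (arc_connected Sv); lia.
Qed.

Lemma hole_triangle_free S x y z : hole e S -> x \in S -> y \in S -> z \in S ->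
  e x y -> e y z -> ~~ e x z.
Proof.
move=> hS xS yS zS exy eyz; apply/negP => exz.
have [q [M [[RE _ _ nyq] [_ _ _ /touchesP nxM]]]] := hole_around hS xS yS exy.
have : z \in S :\: [set x; y].
  rewrite !inE zS andbT negb_or; apply/andP; split.
    by apply: contraTneq exz => ->; rewrite eirr.
  by apply: contraTneq eyz => ->; rewrite eirr.
rewrite RE !inE => /orP [/eqP zq|zM]; first by move: nyq; rewrite -zq eyz.
by apply: nxM; exists z; rewrite // esym.
Qed.

Lemma hole_setD2 S x a : hole e S -> x \in S -> a \in S -> e x a ->
  [/\ connected_set e (S :\: [set x; a]), touches (S :\: [set x; a]) x
    & touches (S :\: [set x; a]) a].
Proof.
move=> hS xS aS exa.
have [q [M [[-> _ exq _] [cM /touchesP [z zM eza] qM _]]]] := hole_around hS xS aS exa.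
split; first by apply: connected_setU; rewrite ?adjacent_set1l //; apply: connected_set1.
- by apply/touchesP; exists q; rewrite ?setU11 // esym.
- by apply/touchesP; exists z; rewrite // !inE zM orbT.
Qed.

Lemma hole_setD1 S x : hole e S -> x \in S ->
  connected_set e (S :\ x) /\ touches (S :\ x) x.
Proof.
move=> hS xS; have [a aS exa] := hole_neighbour hS xS.
have [cR Rx Ra] := hole_setD2 hS xS aS exa.
have aR : a \in S :\ x by rewrite !inE aS andbT eq_sym edge_neq.
rewrite -(setD1K aR) setDDl; split.
  by apply: connected_setU; rewrite ?adjacent_set1l //; apply: connected_set1.
by apply/touchesP; exists a; rewrite ?inE ?eqxx // esym.
Qed.

(** * Gluing two holes into F1 or F2 *)

Lemma F2_of_holes S1 S2 (K : {set V}) a b :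
  hole e S1 -> hole e S2 -> connected_set e K ->
  a \in K -> b \in K -> a \in S1 -> b \in S2 ->
  [disjoint K & S1 :\ a] -> [disjoint K & S2 :\ b] ->
  [disjoint S1 :\ a & S2 :\ b] -> ~~ adjacent (S1 :\ a) (S2 :\ b) ->
  (forall z, z \in S1 :\ a -> touches K z -> e a z) ->
  (forall z, z \in S2 :\ b -> touches K z -> e b z) ->
  induced_minor F2 e.
Proof.
move=> h1 h2 cK aK bK aS bS dK1 dK2 d12 n12 TK1 TK2.
have around_sub (S M : {set V}) c p q : S :\: [set c; p] = q |: M -> p \in S -> e c p ->
    [/\ [set p] \subset S :\ c, [set q] \subset S :\ c, M \subset S :\ c,
        p != q & p \notin M].
  move=> RE pS cp.
  have sRS : S :\: [set c; p] \subset S :\ c by apply: setDS; rewrite sub1set !inE eqxx.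
  have : p \notin S :\: [set c; p] by rewrite !inE eqxx orbT.
  rewrite RE !inE negb_or => /andP [pq pM]; split=> //.
  - by rewrite sub1set !inE pS andbT eq_sym edge_neq.
  - by rewrite sub1set (subsetP sRS) // RE setU11.
  - by apply: subset_trans sRS; rewrite RE subsetU1.
have nKM (S M : {set V}) c : M \subset S :\ c -> ~~ touches M c ->
    (forall z, z \in S :\ c -> touches K z -> e c z) -> ~~ adjacent K M.
  move=> /subsetP MS ncM TK; apply/adjacentP => -[x [y [xK yM exy]]].
  move/touchesP: ncM; apply; exists y; rewrite // esym.
  by apply: TK; [apply: MS | apply/touchesP; exists x].
have [p1 p1S ap1] := hole_neighbour h1 aS.
have [q1 [M1 [[R1E q1M1 aq1 npq1] [cM1 pM1 qM1 naM1]]]] := hole_around h1 aS p1S ap1.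
have [p1D q1D M1D p1q1 p1M1] := around_sub _ _ _ _ _ R1E p1S ap1.
have [p2 p2S bp2] := hole_neighbour h2 bS.
have [q2 [M2 [[R2E q2M2 bq2 npq2] [cM2 pM2 qM2 nbM2]]]] := hole_around h2 bS p2S bp2.
have [p2D q2D M2D p2q2 p2M2] := around_sub _ _ _ _ _ R2E p2S bp2.
(* [K] is the shared vertex of F2; each 4-cycle is [K], a neighbour [p] of the
   attachment vertex, the rest [M] of the hole and its other neighbour [q]. *)
apply: (@F2_of K [set p1] M1 [set q1] [set p2] M2 [set q2]).
all: try exact: set1_neq0; try (by apply/set0Pn; exists a).
all: try (by apply: touches_neq0 pM1); try (by apply: touches_neq0 pM2).
all: try exact: connected_set1; try done.
all: try (by apply: disjointWr dK1); try (by apply: disjointWr dK2).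
all: try (by apply: disjointW d12); try (by apply: contra n12; apply: adjacentW).
all: try (by apply: nKM M1D naM1 TK1); try (by apply: nKM M2D nbM2 TK2).
all: rewrite ?adjacent_set1l ?adjacent_set1r ?touches_set1 1?esym //.
all: try (by apply/touchesP; exists a); try (by apply/touchesP; exists b).
all: by rewrite 1?(disjoint_sym _ [set _]) ?disjoints1 ?inE // eq_sym.
Qed.

Lemma F1_of_holes S1 S2 a1 a2 y1 y2 : hole e S1 -> hole e S2 ->
  a1 \in S1 -> y1 \in S1 -> a2 \in S2 -> y2 \in S2 -> e a1 y1 -> e a2 y2 ->
  a1 = a2 \/ e a1 a2 -> y1 = y2 \/ e y1 y2 ->
  [disjoint [set a1; a2] & [set y1; y2]] ->
  [disjoint [set a2; y2] & S1 :\: [set a1; y1]] ->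
  [disjoint [set a1; y1] & S2 :\: [set a2; y2]] ->
  [disjoint S1 :\: [set a1; y1] & S2 :\: [set a2; y2]] ->
  ~~ adjacent (S1 :\: [set a1; y1]) (S2 :\: [set a2; y2]) ->
  {in S1 :\: [set a1; y1], forall z, e a2 z -> e a1 z} ->
  {in S1 :\: [set a1; y1], forall z, e y2 z -> e y1 z} ->
  {in S2 :\: [set a2; y2], forall z, e a1 z -> e a2 z} ->
  {in S2 :\: [set a2; y2], forall z, e y1 z -> e y2 z} ->
  induced_minor F1 e.
Proof.
move=> h1 h2 a1S y1S a2S y2S ay1 ay2 a12 y12 dAY dR1 dR2 d12 n12 Ta1 Ty1 Ta2 Ty2.
rewrite esym in ay1; rewrite esym in ay2.
have [q1 [M1 [[R1E q1M1 yq1 naq1] [cM1 aM1 qM1 nyM1]]]] := hole_around h1 y1S a1S ay1.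
have [q2 [M2 [[R2E q2M2 yq2 naq2] [cM2 aM2 qM2 nyM2]]]] := hole_around h2 y2S a2S ay2.
rewrite [[set y1; a1]]setUC in R1E; rewrite [[set y2; a2]]setUC in R2E.
set R1 := S1 :\: [set a1; y1] in R1E dR1 dR2 d12 n12 Ta1 Ty1 Ta2 Ty2.
set R2 := S2 :\: [set a2; y2] in R2E dR1 dR2 d12 n12 Ta1 Ty1 Ta2 Ty2.
have out1 x : x \notin R1 -> (x != q1) && (x \notin M1) by rewrite R1E !inE negb_or.
have out2 x : x \notin R2 -> (x != q2) && (x \notin M2) by rewrite R2E !inE negb_or.
have /out1 /andP [a1q1 a1M1] : a1 \notin R1 by rewrite !inE eqxx.
have /out1 /andP [y1q1 y1M1] : y1 \notin R1 by rewrite !inE eqxx orbT.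
have /out2 /andP [a2q2 a2M2] : a2 \notin R2 by rewrite !inE eqxx.
have /out2 /andP [y2q2 y2M2] : y2 \notin R2 by rewrite !inE eqxx orbT.
move: dR1 dR2; rewrite !disjoint_set2.
move=> /andP [/out1 /andP [a2q1 a2M1] /out1 /andP [y2q1 y2M1]].
move=> /andP [/out2 /andP [a1q2 a1M2] /out2 /andP [y1q2 y1M2]].
have q1R : q1 \in R1 by rewrite R1E setU11.
have q2R : q2 \in R2 by rewrite R2E setU11.
have M1R : M1 \subset R1 by rewrite R1E subsetU1.
have M2R : M2 \subset R2 by rewrite R2E subsetU1.
(* The 6-cycle of F1 is [{a1, a2}], [M1], [q1], [{y1, y2}], [q2], [M2], and the
   edge [a1 y1] provides its chord. *)
apply: (@F1_of [set a1; a2] M1 [set q1] [set y1; y2] [set q2] M2).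
all: try exact: set1_neq0; try exact: set2_neq0.
all: try (by apply: touches_neq0 aM1); try (by apply: touches_neq0 aM2).
all: try exact: connected_set1; try exact: connected_set2; try done.
all: try (by apply: disjointW d12; rewrite ?sub1set).
all: try (by apply: contra n12; apply: adjacentW; rewrite ?sub1set).
all: rewrite ?disjoint_set2 ?(disjoint_sym _ [set _; _]) ?disjoint_set2.
all: rewrite ?disjoints1 1?(disjoint_sym _ [set _]) ?disjoints1 ?inE.
all: rewrite ?adjacent_set2l ?adjacent_set2r ?adjacent_set1l ?adjacent_set1r.
all: rewrite ?touches_set1 ?touches_set2 ?aM1 ?aM2 ?qM1 ?qM2 ?orbT //.
all: rewrite ?a1M1 ?a2M1 ?a1M2 ?a2M2 ?y1M1 ?y2M1 ?y1M2 ?y2M2.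
all: rewrite ?a1q1 ?a2q1 ?a1q2 ?a2q2 ?y1q1 ?y2q1 ?y1q2 ?y2q2 //.
all: rewrite ?negb_or ?[e q1 _]esym ?[e q2 _]esym ?yq1 ?yq2 ?ay1 ?naq1 ?naq2 ?nyM1 ?nyM2.
all: rewrite ?orbT ?andbT //=.
- by apply: contra naq1; apply: Ta1.
- by apply: contra naq2; apply: Ta2.
- by apply: contra nyM1; apply: touches_nbrW M1R Ty1.
- by apply: contra nyM2; apply: touches_nbrW M2R Ty2.
Qed.

(** * Holes in a graph without K4, K23, F1, F2 induced minors *)

Section Exclusions.
Hypotheses (nK4 : ~ induced_minor K4 e) (nK23 : ~ induced_minor K23 e).
Hypotheses (nF1 : ~ induced_minor F1 e) (nF2 : ~ induced_minor F2 e).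

Lemma hole_touch_adj S X u w : hole e S -> connected_set e X -> [disjoint X & S] ->
  u \in S -> w \in S -> u != w -> touches X u -> touches X w -> e u w.
Proof.
move=> hS cX dX uS wS; have [n [v [Sv <-]]] := hole_ecycle_at hS uS.
have [j jn ->] := ecycleP Sv wS; rewrite (ecycle_eq0 Sv) // => j0 T0 Tj.
apply: contraT; rewrite (ecycle_adj0 Sv) // negb_or => /andP [j1 jn1].
have n3 := ecycle_gt3 Sv; have {j0 j1 jn1} jmid : 1 < j < n - 1 by lia.
exfalso; case: (pickP [pred t : 'I_n | [&& val t != 0, val t != j & touches X (v t)]]).
  move=> [t tn] /and3P [/= t0 tj Tt].
  by case: (ltngtP t j) tj => // tj _; apply: nK4;
    [apply: (@K4_of_touches3 _ _ _ Sv X t j) | apply: (@K4_of_touches3 _ _ _ Sv X j t)];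
    rewrite // ?tj; lia.
move=> no; apply: nK23; apply: (@K23_of_touches2 _ _ _ Sv X j) => // t tn t0 tj.
by move: (no (Ordinal tn)); rewrite /= t0 tj => /negbT.
Qed.

Lemma hole_touch_edge S X u w y : hole e S -> connected_set e X ->
  [disjoint X & S] -> u \in S -> w \in S -> e u w ->
  touches X u -> touches X w -> y \in S -> touches X y -> y \in [set u; w].
Proof.
move=> hS cX dX uS wS euw Tu Tw yS Ty; rewrite !inE.
case: (eqVneq y u) => //= yu; case: (eqVneq y w) => //= yw.
have eyu := hole_touch_adj hS cX dX yS uS yu Ty Tu.
have eyw := hole_touch_adj hS cX dX yS wS yw Ty Tw.
by have := hole_triangle_free hS yS uS wS eyu euw; rewrite eyw.
Qed.

Lemma hole_common_nbr_adj S b u w : hole e S -> b \notin S ->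
  u \in S -> w \in S -> u != w -> e b u -> e b w -> e u w.
Proof.
move=> hS bS uS wS uw bu bw.
by apply: (hole_touch_adj hS (@connected_set1 b)); rewrite ?disjoints1 ?touches_set1.
Qed.

Lemma holes_bridge_adjacent S1 S2 a b : hole e S1 -> hole e S2 ->
  [disjoint S1 & S2] -> a \in S1 -> b \in S2 -> e a b ->
  adjacent (S1 :\ a) (S2 :\ b).
Proof.
move=> h1 h2 d12 aS bS eab; apply: contraT => n12; exfalso; apply: nF2.
have aS2 : a \notin S2 by rewrite (disjointFr d12 aS).
have bS1 : b \notin S1 by rewrite (disjointFl d12 bS).
apply: (F2_of_holes (a := a) (b := b) h1 h2 (connected_set2 (or_intror eab))) => //.
- by rewrite !inE eqxx.
- by rewrite !inE eqxx orbT.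
- by rewrite disjoint_set2 !inE eqxx (negbTE bS1) andbF.
- by rewrite disjoint_set2 !inE eqxx (negbTE aS2) andbF.
- by apply: disjointW d12; apply: subsetDl.
- move=> z /setD1P [za zS]; rewrite touches_set2 => /orP [] // ebz.
  by apply: (hole_common_nbr_adj h1 bS1); rewrite 1?eq_sym // esym.
- move=> z /setD1P [zb zS]; rewrite touches_set2 => /orP [] // eaz.
  by apply: (hole_common_nbr_adj h2 aS2); rewrite 1?eq_sym // esym.
Qed.

Lemma holes_cross_edges S1 S2 a a' b b' : hole e S1 -> hole e S2 ->
  [disjoint S1 & S2] -> a \in S1 -> a' \in S1 -> b \in S2 -> b' \in S2 ->
  a != a' -> b != b' -> e a b -> e a' b' ->
  [/\ e a a', e b b' & forall y z, y \in S1 -> z \in S2 -> e y z ->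
                       y \in [set a; a'] /\ z \in [set b; b']].
Proof.
move=> h1 h2 d12 aS a'S bS b'S aa' bb' eab eab'.
have c1 := hole_connected h1; have c2 := hole_connected h2.
have d21 : [disjoint S2 & S1] by rewrite disjoint_sym.
have T2 y z : z \in S2 -> e y z -> touches S2 y.
  by move=> zS eyz; apply/touchesP; exists z; rewrite // esym.
have T1 y z : y \in S1 -> e y z -> touches S1 z by move=> yS eyz; apply/touchesP; exists y.
have eaa' := hole_touch_adj h1 c2 d21 aS a'S aa' (T2 _ _ bS eab) (T2 _ _ b'S eab').
have ebb' := hole_touch_adj h2 c1 d12 bS b'S bb' (T1 _ _ aS eab) (T1 _ _ a'S eab').
split=> // y z yS zS eyz; split.
- exact: hole_touch_edge h1 c2 d21 aS a'S eaa' (T2 _ _ bS eab) (T2 _ _ b'S eab')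
    yS (T2 _ _ zS eyz).
- exact: hole_touch_edge h2 c1 d12 bS b'S ebb' (T1 _ _ aS eab) (T1 _ _ a'S eab')
    zS (T1 _ _ yS eyz).
Qed.

Lemma disjoint_holes_nonadjacent S1 S2 : hole e S1 -> hole e S2 ->
  [disjoint S1 & S2] -> ~~ adjacent S1 S2.
Proof.
move=> h1 h2 d12; apply/adjacentP => -[a [b [aS bS eab]]].
have /adjacentP [a' [b' [/setD1P [a'a a'S] /setD1P [b'b b'S] eab']]] :=
  holes_bridge_adjacent h1 h2 d12 aS bS eab.
rewrite eq_sym in a'a; rewrite eq_sym in b'b.
have [eaa' ebb' cross] := holes_cross_edges h1 h2 d12 aS a'S bS b'S a'a b'b eab eab'.
have neq12 y z : y \in S1 -> z \in S2 -> y != z.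
  by move=> yS zS; apply: contraTneq zS => <-; rewrite (disjointFr d12 yS).
(* A single diagonal of the square [a b b' a'] contradicts holes_bridge_adjacent;
   both diagonals give K4 and none gives F1. *)
have diag : e a b' = e a' b.
  apply/idP/idP => [eab2|ea'b].
  - have /adjacentP [y [z [/setD1P [ya yS] /setD1P [zb zS] eyz]]] :=
      holes_bridge_adjacent h1 h2 d12 aS b'S eab2.
    have [] := cross _ _ yS zS eyz; rewrite !inE (negbTE ya) (negbTE zb) orbF /=.
    by move=> /eqP <- /eqP <-.
  - have /adjacentP [y [z [/setD1P [ya yS] /setD1P [zb zS] eyz]]] :=
      holes_bridge_adjacent h1 h2 d12 a'S bS ea'b.
    have [] := cross _ _ yS zS eyz; rewrite !inE (negbTE ya) (negbTE zb) orbF /=.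
    by move=> /eqP <- /eqP <-.
have noR1 y z : y \in S1 :\: [set a; a'] -> z \in S2 -> ~~ e y z.
  by move=> /setDP [yS yA] zS; apply/negP => /(cross _ _ yS zS) []; rewrite (negbTE yA).
have noR2 y z : y \in S1 -> z \in S2 :\: [set b; b'] -> ~~ e y z.
  by move=> yS /setDP [zS zB]; apply/negP => /(cross _ _ yS zS) [_]; rewrite (negbTE zB).
case: (boolP (e a b')) => eab2.
  by apply: nK4; apply: (K4_of_clique eaa' eab eab2); rewrite // -diag.
apply: nF1.
apply: (F1_of_holes h1 h2 aS a'S bS b'S eaa' ebb' (or_intror eab) (or_intror eab')).
- by rewrite disjoint_set2 !inE !negb_or a'a b'b neq12 // eq_sym neq12.
- apply: (disjointWr (subsetDl _ _)).
  by rewrite disjoint_set2 (disjointFl d12 bS) (disjointFl d12 b'S).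
- apply: (disjointWr (subsetDl _ _)).
  by rewrite disjoint_set2 (disjointFr d12 aS) (disjointFr d12 a'S).
- by apply: disjointW d12; apply: subsetDl.
- apply/adjacentP => -[y [z [yR /setDP [zS _] eyz]]].
  by move: (noR1 _ _ yR zS); rewrite eyz.
- by move=> z zR; rewrite esym (negbTE (noR1 _ _ zR bS)).
- by move=> z zR; rewrite esym (negbTE (noR1 _ _ zR b'S)).
- by move=> z zR; rewrite (negbTE (noR2 _ _ aS zR)).
- by move=> z zR; rewrite (negbTE (noR2 _ _ a'S zR)).
Qed.

Lemma holes_intersect S1 S2 : connected_graph e -> hole e S1 -> hole e S2 ->
  ~~ [disjoint S1 & S2].
Proof.
move=> conn h1 h2; apply/negP => d12; have n12 := disjoint_holes_nonadjacent h1 h2 d12.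
have [[n [v Sv]] [m [w Sw]]] := (hole_ecycle h1, hole_ecycle h2).
have [a [b [s [aS bS pab sout]]]] :=
  path_between (ecycle_in Sv 0) (ecycle_in Sw 0) d12 (conn _ _).
have [cH Hb cT Ta] := path_sides pab.
have aS2 : a \notin S2 by rewrite (disjointFr d12 aS).
have bS1 : b \notin S1 by rewrite (disjointFl d12 bS).
have sS z : z \in s -> (z \notin S1) && (z \notin S2).
  by move/sout; rewrite inE negb_or.
apply: nF2; apply: (F2_of_holes (a := a) (b := b) h1 h2 (connected_path pab)).
- by rewrite inE mem_head.
- by rewrite inE in_cons mem_rcons mem_head orbT.
- by [].
- by [].
- apply/disjointP => z; rewrite inE in_cons mem_rcons in_cons !inE.
  case/or3P => [/eqP ->|/eqP ->|/sS /andP [zS1 _]]; rewrite ?eqxx ?(negbTE bS1) ?andbF //.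
  by rewrite (negbTE zS1) andbF.
- apply/disjointP => z; rewrite inE in_cons mem_rcons in_cons !inE.
  case/or3P => [/eqP ->|/eqP ->|/sS /andP [_ zS2]]; rewrite ?eqxx ?(negbTE aS2) ?andbF //.
  by rewrite (negbTE zS2) andbF.
- by apply: disjointW d12; apply: subsetDl.
- by apply: contra n12; apply: adjacentW; apply: subsetDl.
- move=> z /setD1P [za zS] /touchesP [k]; rewrite inE in_cons => /orP [/eqP -> //|kT ekz].
  have dT : [disjoint [set u in rcons s b] & S1].
    by apply/disjointP => u; rewrite inE mem_rcons in_cons => /orP [/eqP ->|/sS /andP []].
  apply: (hole_touch_adj h1 cT dT aS zS _ Ta); first by rewrite eq_sym.
  by apply/touchesP; exists k; rewrite ?inE.
- move=> z /setD1P [zb zS] /touchesP [k]; rewrite inE in_cons mem_rcons in_cons.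
  rewrite orbCA => /orP [/eqP -> //|kH ekz].
  have dH : [disjoint [set u in a :: s] & S2].
    by apply/disjointP => u; rewrite inE in_cons => /orP [/eqP ->|/sS /andP []].
  apply: (hole_touch_adj h2 cH dH bS zS _ Hb); first by rewrite eq_sym.
  by apply/touchesP; exists k; rewrite ?inE.
Qed.

Lemma holes_meet_not_edge S1 S2 c d : hole e S1 -> hole e S2 -> e c d ->
  S1 :&: S2 != [set c; d].
Proof.
move=> h1 h2 ecd; apply/eqP => I12.
have /setIP [cS1 cS2] : c \in S1 :&: S2 by rewrite I12 !inE eqxx.
have /setIP [dS1 dS2] : d \in S1 :&: S2 by rewrite I12 !inE eqxx orbT.
have [cR2 R2c R2d] := hole_setD2 h2 cS2 dS2 ecd.
have dR2 : [disjoint S2 :\: [set c; d] & S1].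
  apply/disjointP => z /setDP [zS2 zcd]; apply: contra zcd => zS1.
  by rewrite -I12 inE zS1.
apply: nF1.
apply: (F1_of_holes h1 h2 cS1 dS1 cS2 dS2 ecd ecd (or_introl erefl) (or_introl erefl)).
- by rewrite setUid disjoints1 !inE negb_or (edge_neq ecd) andbT.
- by rewrite disjoint_sym disjoint_setDl.
- by rewrite disjoint_sym disjoint_setDl.
- by rewrite -setI_eq0 -setDIl I12 setDv.
- apply/adjacentP => -[u [w [/setDP [uS1 /negP ucd] wR euw]]]; apply: ucd.
  apply: (hole_touch_edge h1 cR2 dR2 cS1 dS1 ecd R2c R2d uS1).
  by apply/touchesP; exists w; rewrite // esym.
all: by [].
Qed.

Lemma holes_meet_vertex_nonadjacent S1 S2 c : hole e S1 -> hole e S2 ->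
  S1 :&: S2 = [set c] -> ~~ adjacent (S1 :\ c) (S2 :\ c).
Proof.
move=> h1 h2 I12; apply/adjacentP => -[y [z [/setD1P [yc yS1] /setD1P [zc zS2] eyz]]].
have /setIP [cS1 cS2] : c \in S1 :&: S2 by rewrite I12 set11.
have only_c u : u \in S1 -> u \in S2 -> u = c.
  by move=> uS1 uS2; apply/set1P; rewrite -I12 inE uS1.
have [cR2 R2c] := hole_setD1 h2 cS2.
have dR2 : [disjoint S2 :\ c & S1].
  by apply/disjointP => u /setD1P [uc uS2]; apply: contra uc => /only_c ->.
have yS2 : y \notin S2 by apply: contra yc => /(only_c _ yS1) ->.
have zS1 : z \notin S1 by apply: contra zc => /only_c -> //.
have ecy : e c y.
  rewrite esym; apply: (hole_touch_adj h1 cR2 dR2 yS1 cS1 yc _ R2c).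
  by apply/touchesP; exists z; [rewrite !inE zc | rewrite esym].
have ecz : e c z.
  by apply: (hole_common_nbr_adj h2 yS2 cS2 zS2); rewrite // 1?eq_sym // esym.
have dz : [disjoint [set z] & S1] by rewrite disjoints1.
have dy : [disjoint [set y] & S2] by rewrite disjoints1.
apply: nF1.
apply: (F1_of_holes h1 h2 cS1 yS1 cS2 zS2 ecy ecz (or_introl erefl) (or_intror eyz)).
- by rewrite setUid disjoints1 !inE negb_or (edge_neq ecy) (edge_neq ecz).
- by rewrite disjoint_set2 !inE eqxx (negbTE zS1) !andbF.
- by rewrite disjoint_set2 !inE eqxx (negbTE yS2) !andbF.
- apply/disjointP => u /setDP [uS1]; apply: contra => /setDP [uS2 _].
  by rewrite (only_c _ uS1 uS2) !inE eqxx.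
- apply/adjacentP => -[u [w [/setDP [uS1 /negP ucy] /setDP [wS2 wcz] euw]]]; apply: ucy.
  apply: (hole_touch_edge h1 cR2 dR2 cS1 yS1 ecy R2c _ uS1).
    by apply/touchesP; exists z; [rewrite !inE zc | rewrite esym].
  apply/touchesP; exists w; last by rewrite esym.
  by move: wcz; rewrite !inE negb_or wS2 andbT => /andP [].
- by [].
- move=> u /setDP [uS1 /negP ucy] ezu; case: ucy.
  apply: (hole_touch_edge h1 (@connected_set1 z) dz cS1 yS1 ecy);
    by rewrite ?touches_set1 // esym.
- by [].
- move=> u /setDP [uS2 /negP ucz] eyu; case: ucz.
  apply: (hole_touch_edge h2 (@connected_set1 y) dy cS2 zS2 ecz);
    by rewrite ?touches_set1 // esym.
Qed.

Lemma holes_meet_not_vertex S1 S2 c : hole e S1 -> hole e S2 -> S1 :&: S2 != [set c].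
Proof.
move=> h1 h2; apply/eqP => I12.
have /setIP [cS1 cS2] : c \in S1 :&: S2 by rewrite I12 set11.
apply: nF2; apply: (F2_of_holes h1 h2 (@connected_set1 c) (set11 c) (set11 c)) => //.
- by rewrite disjoints1 !inE eqxx.
- by rewrite disjoints1 !inE eqxx.
- by rewrite -setI_eq0 -setDIl I12 setDv.
- exact: holes_meet_vertex_nonadjacent.
- by move=> z _; rewrite touches_set1.
- by move=> z _; rewrite touches_set1.
Qed.

Lemma holes_meet_small S1 S2 : hole e S1 -> hole e S2 ->
  ~~ [disjoint S1 & S2] -> ~~ (S2 \subset S1) ->
  exists c d, (c = d \/ e c d) /\ S1 :&: S2 = [set c; d].
Proof.
move=> h1 h2; rewrite -setI_eq0 => /set0Pn [x /setIP [xS1 xS2]] nsub.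
have [n [v [Sv vx]]] := hole_ecycle_at h2 xS2; rewrite -vx in xS1.
have [k [vk vk1]] := ecycle_exit Sv xS1 nsub.
(* [w] enumerates [S2] from a vertex of [S1] whose successor leaves [S1], and
   [w m] is the first return to [S1]. *)
have Sw := ecycle_rot Sv k; set w := fun i => v (k + i) in Sw.
have w0S1 : w 0 \in S1 by rewrite /w addn0.
have w1S1 : w 1 \notin S1 by rewrite /w addn1.
have [m /andP [m1 mn] [wmS1 wout]] := ecycle_return Sw w0S1 w1S1.
have n3 := ecycle_gt3 Sw.
set X := arc w 1 (m - 1).
have cX : connected_set e X by apply: (arc_connected Sw); lia.
have dX : [disjoint X & S1].
  by apply/disjointP => z /arcP [t tm ->]; apply: wout; lia.
have [T0 Tm] := ecycle_arc_ends Sw m1.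
have w0m : w 0 = w m \/ e (w 0) (w m).
  case: (eqVneq (w 0) (w m)) => [|ne]; [by left | right].
  exact: (hole_touch_adj h1 cX dX w0S1 wmS1 ne T0 Tm).
have mn1 := ecycle_close Sw m1 mn w0m.
exists (w 0), (w m); split=> //.
apply/setP=> z; rewrite !inE; apply/andP/orP => [[zS1 /(ecycleP Sw) [t tn zE]]|].
  case: (posnP t) => [t0|t0]; first by left; rewrite zE t0.
  case: (ltnP t m) => [tm|mt].
    by move: zS1; rewrite zE (negbTE (wout _ _)) // t0 tm.
  have tE : t = m by clear -tn mt mn1 mn; lia.
  by right; rewrite zE tE.
by case=> /eqP ->; split; rewrite ?w0S1 ?wmS1 //; apply: ecycle_in Sw _.
Qed.

Lemma holes_meet_sub S1 S2 : hole e S1 -> hole e S2 ->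
  ~~ [disjoint S1 & S2] -> S2 \subset S1.
Proof.
move=> h1 h2 m12; apply: contraT => nsub.
have [c [d [[<-|ecd] I12]]] := holes_meet_small h1 h2 m12 nsub.
  by move: (holes_meet_not_vertex c h1 h2); rewrite I12 setUid eqxx.
by move: (holes_meet_not_edge h1 h2 ecd); rewrite I12 eqxx.
Qed.

End Exclusions.

End Graph.

Theorem lemma4p5 (V : finType) (e : rel V) :
  symmetric e -> irreflexive e ->
  connected_graph e ->
  ~ induced_minor K4 e -> ~ induced_minor K23 e ->
  ~ induced_minor F1 e -> ~ induced_minor F2 e ->
  forall S1 S2 : {set V}, hole e S1 -> hole e S2 -> S1 = S2.
Proof.
move=> esym eirr conn nK4 nK23 nF1 nF2 S1 S2 h1 h2.
have meet := holes_intersect esym eirr nK4 nK23 nF1 nF2 conn.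
apply/eqP; rewrite eqEsubset.
by rewrite !(holes_meet_sub esym eirr nK4 nK23 nF1 nF2) // meet.
Qed.
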